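(* Let $0\le\sigma<1$ and $f\colon[0,1]\to\mathbb R$, and put $f_\sigma(x)=f(x)/x^\sigma$. Assume that the Riemann sums $R_{f_\sigma}(\ell)=\frac1\ell\sum_{k=1}^\ell f_\sigma(k/\ell)$ converge to a finite limit $I(f_\sigma)$ as $\ell\to\infty$. Then $$\lim_{n\to\infty}\frac{S_{n,\sigma}(f)}{\sum_{1\le\ell\le n}\ell^{1-2\sigma}}=I(f_\sigma).$$
   Context: $S_{n,\sigma}(f)=\sum_{1\le k\le\ell\le n}\frac{1}{(k\ell)^\sigma}f\big(\frac k\ell\big)$ (quadratic Riemann sum). *)

From Stdlib Require Import Reals.
From Coquelicot Require Import Coquelicot.
Open Scope R_scope.

Fixpoint sum_from_1 (n : nat) (g : nat -> R) : R :=
  match n with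
  | O => 0
  | S m => sum_from_1 m g + g (S m)
  end.

(* f_sigma(x) = f(x) / x^sigma (used only at x = k/l > 0) *)
Definition f_sigma (sigma : R) (f : R -> R) (x : R) : R :=
  f x / Rpower x sigma.

Definition riemann_sum (g : R -> R) (l : nat) : R :=
  / INR l * sum_from_1 l (fun k => g (INR k / INR l)).

(* Quadratic Riemann sum
   S_{n,sigma}(f) = sum_{1<=k<=l<=n} (k l)^{-sigma} f(k/l) *)
Definition S_quad (n : nat) (sigma : R) (f : R -> R) : R :=
  sum_from_1 n (fun l =>
    sum_from_1 l (fun k =>
      / Rpower (INR k * INR l) sigma * f (INR k / INR l))).

Definition denom (n : nat) (sigma : R) : R :=
  sum_from_1 n (fun l => Rpower (INR l) (1 - 2 * sigma)).

(* Writing k^-s l^-s = (k/l)^-s l^(1-2s) l^-1, the quadratic sum becomes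
   S_n = sum_{l<=n} l^(1-2s) R(l), where R(l) is the l-th Riemann sum of f_s.
   So S_n / sum_{l<=n} l^(1-2s) is a weighted Cesaro mean of the convergent
   sequence R(l).  Since 1-2s > -1, the weights dominate 1/l, whose partial
   sums grow like ln n; the weights therefore have divergent sum and the
   weighted means converge to the same limit I. *)

From Stdlib Require Import Reals Lra Lia.
From Coquelicot Require Import Coquelicot.
Open Scope R_scope.

Lemma sum_from_1_S_sum_f_R0 (g : nat -> R) (n : nat) :
  sum_from_1 (S n) g = sum_f_R0 (fun k => g (S k)) n.
Proof.
  induction n as [|n IH]; simpl in *; [lra|].
  now rewrite <- IH.
Qed.

Lemma sum_from_1_ext (g h : nat -> R) (n : nat) :
  (forall k, (1 <= k <= n)%nat -> g k = h k) ->
  sum_from_1 n g = sum_from_1 n h.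
Proof.
  induction n as [|n IH]; intros Hgh; simpl; [reflexivity|].
  rewrite IH, Hgh; [reflexivity | lia |].
  intros k Hk; apply Hgh; lia.
Qed.

Lemma sum_from_1_le (g h : nat -> R) (n : nat) :
  (forall k, (1 <= k <= n)%nat -> g k <= h k) ->
  sum_from_1 n g <= sum_from_1 n h.
Proof.
  induction n as [|n IH]; intros Hgh; simpl; [lra|].
  apply Rplus_le_compat; [|apply Hgh; lia].
  apply IH; intros k Hk; apply Hgh; lia.
Qed.

Lemma sum_from_1_scal (c : R) (g : nat -> R) (n : nat) :
  sum_from_1 n (fun k => c * g k) = c * sum_from_1 n g.
Proof. induction n as [|n IH]; simpl; [ring | rewrite IH; ring]. Qed.

Lemma is_lim_seq_weighted_mean (a b : nat -> R) (I : R) :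
  (forall l, (0 < l)%nat -> 0 < a l) ->
  is_lim_seq (fun n => sum_from_1 n a) p_infty ->
  is_lim_seq b I ->
  is_lim_seq (fun n => sum_from_1 n (fun l => a l * b l) / sum_from_1 n a) I.
Proof.
  intros Ha Hdiv Hb.
  apply is_lim_seq_incr_1, is_lim_seq_Reals.
  apply is_lim_seq_incr_1 in Hb.
  apply is_lim_seq_incr_1, is_lim_seq_p_infty_Reals in Hdiv.
  eapply Un_cv_ext.
  2: { apply (Cesaro (fun k => a (S k)) (fun k => b (S k))).
       - now apply is_lim_seq_Reals.
       - intros k; apply Ha; lia.
       - intros M; destruct (Hdiv M) as [N HN].
         exists N; intros n Hn; rewrite <- sum_from_1_S_sum_f_R0; auto. }
  intros n.
  now rewrite !sum_from_1_S_sum_f_R0.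
Qed.

Lemma ln_succ_sub_le_inv (x : R) : 0 < x -> ln (x + 1) - ln x <= / x.
Proof.
  intros Hx.
  rewrite <- ln_div by lra.
  replace ((x + 1) / x) with (1 + / x) by (field; lra).
  rewrite <- (ln_exp (/ x)) at 2.
  apply ln_le; [pose proof (Rinv_0_lt_compat x Hx); lra | apply exp_ineq1_le].
Qed.

Lemma ln_le_harmonic (n : nat) : ln (INR (S n)) <= sum_from_1 n (fun l => / INR l).
Proof.
  induction n as [|n IH].
  - simpl; rewrite ln_1; lra.
  - cbn [sum_from_1].
    assert (Hn : 0 < INR (S n)) by (apply lt_0_INR; lia).
    pose proof (ln_succ_sub_le_inv _ Hn) as Hstep.
    rewrite <- S_INR in Hstep.
    lra.
Qed.

Lemma is_lim_seq_ln_INR : is_lim_seq (fun n => ln (INR n)) p_infty.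
Proof.
  apply (is_lim_comp_seq ln INR p_infty p_infty).
  - exact is_lim_ln_p.
  - exists 0%nat; intros n _; discriminate.
  - exact is_lim_seq_INR.
Qed.

Lemma is_lim_seq_sum_Rpower_INR (e : R) :
  -1 <= e -> is_lim_seq (fun n => sum_from_1 n (fun l => Rpower (INR l) e)) p_infty.
Proof.
  intros He.
  apply (is_lim_seq_le_p_loc (fun n => ln (INR (S n)))).
  - exists 0%nat; intros n _.
    eapply Rle_trans; [apply ln_le_harmonic|].
    apply sum_from_1_le; intros l Hl.
    assert (Hl1 : 1 <= INR l) by (rewrite <- INR_1; apply le_INR; lia).
    rewrite <- (Rpower_1 (INR l)) at 1 by lra.
    rewrite <- Rpower_Ropp.
    now apply Rle_Rpower.
  - now apply (is_lim_seq_incr_1 (fun n => ln (INR n))), is_lim_seq_ln_INR.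
Qed.

Lemma Rpower_pos (x s : R) : 0 < Rpower x s.
Proof. apply exp_pos. Qed.

Lemma Rinv_Rpower_mul_split (s x y : R) : 0 < x -> 0 < y ->
  / Rpower (x * y) s = Rpower y (1 - 2 * s) * (/ y * / Rpower (x / y) s).
Proof.
  intros Hx Hy.
  assert (Hxy : Rpower (x * y) s = Rpower (x / y) s * Rpower y s * Rpower y s).
  { assert (Hq : 0 < x / y) by (apply Rdiv_lt_0_compat; lra).
    replace (x * y) with (x / y * y * y) by (field; lra).
    rewrite !Rpower_mult_distr; auto; apply Rmult_lt_0_compat; lra. }
  assert (Hy12 : Rpower y (1 - 2 * s) = y * / (Rpower y s * Rpower y s)).
  { unfold Rminus.
    rewrite Rpower_plus, Rpower_Ropp, Rpower_1 by lra.
    replace (2 * s) with (s + s) by ring.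
    now rewrite Rpower_plus. }
  rewrite Hxy, Hy12.
  pose proof (Rpower_pos (x / y) s); pose proof (Rpower_pos y s).
  field; repeat split; lra.
Qed.

Lemma S_quad_eq_weighted_riemann_sums (n : nat) (sigma : R) (f : R -> R) :
  S_quad n sigma f =
  sum_from_1 n (fun l => Rpower (INR l) (1 - 2 * sigma) * riemann_sum (f_sigma sigma f) l).
Proof.
  apply sum_from_1_ext; intros l Hl.
  unfold riemann_sum; rewrite <- !sum_from_1_scal.
  apply sum_from_1_ext; intros k Hk.
  unfold f_sigma, Rdiv at 2.
  rewrite (Rinv_Rpower_mul_split sigma (INR k) (INR l)) by (apply lt_0_INR; lia).
  ring.
Qed.

Theorem theorem5p3 (sigma : R) (f : R -> R) (I : R) :
  0 <= sigma < 1 ->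
  is_lim_seq (fun l => riemann_sum (f_sigma sigma f) l) I ->
  is_lim_seq (fun n => S_quad n sigma f / denom n sigma) I.
Proof.
  intros Hsigma HR.
  set (w := fun l => Rpower (INR l) (1 - 2 * sigma)).
  apply (is_lim_seq_ext
    (fun n => sum_from_1 n (fun l => w l * riemann_sum (f_sigma sigma f) l) / sum_from_1 n w)).
  { intros n; now rewrite S_quad_eq_weighted_riemann_sums. }
  apply is_lim_seq_weighted_mean; [| apply is_lim_seq_sum_Rpower_INR; lra | exact HR].
  intros l _; apply Rpower_pos.
Qed.
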